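(* Skeptic can weakly force the event \[ A_3:=\Bigl\{\xi:\ \limsup_{n\to\infty}s_n=\infty\ \text{and}\ \liminf_{n\to\infty}s_n=-\infty\Bigr\}. \]
   Context: Fair-coin game: in rounds $n=1,2,\dots$ Skeptic announces $M_n\in\mathbb{R}$ (depending only on $x_1,\dots,x_{n-1}$), then Reality announces $x_n\in\{-1,1\}$. A path is an infinite sequence $\xi=x_1x_2\cdots\in\{-1,1\}^{\mathbb{N}}$, and $\Omega$ is the set of paths. We write $s_n:=x_1+\cdots+x_n$, with $s_0=0$. The capital process of a strategy with zero initial capital is $\mathcal{K}^{\mathcal{P}}_n=\sum_{k=1}^nM_kx_k$. Skeptic weakly forces $E\subseteq\Omega$ if some strategy $\mathcal{P}$ has $\mathcal{K}^{\mathcal{P}}_n(\xi)\ge-1$ for all $\xi\in\Omega$ and $n\ge0$, and $\limsup_n\mathcal{K}^{\mathcal{P}}_n(\xi)=\infty$ for every $\xi\notin E$. *)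

From Stdlib Require Import Reals List.
Open Scope R_scope.

(* A path xi : nat -> bool encodes x_{k+1} = xval (xi k), with true = +1, false = -1. *)
Definition path := nat -> bool.

Definition xval (b : bool) : R := if b then 1 else -1.

Definition prefix (xi : path) (n : nat) : list bool := map xi (seq 0 n).

(* A strategy for Skeptic: M_n depends only on x_1..x_{n-1}. *)
Definition strategy := list bool -> R.

Fixpoint capital (P : strategy) (xi : path) (n : nat) : R :=
  match n with
  | O => 0
  | S m => capital P xi m + P (prefix xi m) * xval (xi m)
  end.

Fixpoint spos (xi : path) (n : nat) : R :=
  match n with
  | O => 0
  | S m => spos xi m + xval (xi m)
  end.

Definition limsup_infty (u : nat -> R) : Prop :=
  forall (C : R) (N : nat), exists n, (N <= n)%nat /\ C < u n.

Definition liminf_minfty (u : nat -> R) : Prop :=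
  forall (C : R) (N : nat), exists n, (N <= n)%nat /\ u n < C.

Definition weakly_forces (E : path -> Prop) : Prop :=
  exists P : strategy,
    (forall (xi : path) (n : nat), -1 <= capital P xi n) /\
    (forall xi : path, ~ E xi -> limsup_infty (capital P xi)).

Definition A3 (xi : path) : Prop :=
  limsup_infty (spos xi) /\ liminf_minfty (spos xi).

(* Skeptic bets against new highs of s through the potential V = w(c) g(u),
   where c is the running maximum of s, u = c - s its drawdown,
   g(t) = t + 3 - 1/(t+2) and w(c) = 1/(5 4^c).  Staking half the discrete
   slope of g makes K - V grow by at least w(c) times the midpoint defect of
   the concave g in every round; when s reaches a new maximum the loss is
   absorbed by the factor 4 in w.  As V >= 0 and V_0 = 1/2, the capital stays
   above -1/2.  If s is bounded above, c is eventually constant: either u is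
   unbounded, and so is K >= V - 1/2, or u is bounded and K - V grows
   linearly.  Adding the mirror strategy, which bets against new lows of s,
   takes care of the liminf and keeps the capital above -1. *)

From Stdlib Require Import Reals List.
From Stdlib Require Import Lra Lia Classical.
Open Scope R_scope.

Lemma not_limsup_infty_bounded (u : nat -> R) :
  ~ limsup_infty u -> exists B N, forall n, (N <= n)%nat -> u n <= B.
Proof.
  intros Hu. apply not_all_ex_not in Hu as [B Hu].
  apply not_all_ex_not in Hu as [N Hu].
  exists B, N. intros n Hn. apply Rnot_lt_le. intros HBn. apply Hu. now exists n.
Qed.

Lemma limsup_infty_minorant (u v : nat -> R) (a b : R) (N : nat) :
  0 < a -> (forall n, (N <= n)%nat -> a * u n + b <= v n) ->
  limsup_infty u -> limsup_infty v.
Proof.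
  intros Ha Huv Hu C M.
  destruct (Hu ((C - b) / a) (max N M)) as [n [Hn HC]].
  exists n. split; [lia|].
  assert (C - b < a * u n).
  { apply (Rmult_lt_compat_l a) in HC; [|exact Ha].
    unfold Rdiv in HC. rewrite <- Rmult_assoc, (Rmult_comm a), Rmult_assoc,
      Rinv_r, Rmult_1_r in HC; lra. }
  specialize (Huv n ltac:(lia)). lra.
Qed.

Lemma limsup_infty_linear_growth (w : nat -> R) (d : R) (N : nat) :
  0 < d -> (forall n, (N <= n)%nat -> w n + d <= w (S n)) -> limsup_infty w.
Proof.
  intros Hd Hw.
  assert (Hlin : forall n, (N <= n)%nat -> w N + INR (n - N) * d <= w n).
  { intros n Hn. induction Hn as [|n Hn IH].
    - rewrite Nat.sub_diag. simpl. lra.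
    - specialize (Hw n Hn). replace (S n - N)%nat with (S (n - N)) by lia.
      rewrite S_INR. lra. }
  apply (limsup_infty_minorant (fun n => INR (n - N)) _ d (w N) N Hd);
    [intros n Hn; specialize (Hlin n Hn); lra|].
  intros C M. destruct (INR_unbounded C) as [k Hk].
  exists (N + M + k)%nat. split; [lia|].
  replace (N + M + k - N)%nat with (M + k)%nat by lia.
  rewrite plus_INR. pose proof (pos_INR M). lra.
Qed.

Lemma capital_add (P Q : strategy) (xi : path) (n : nat) :
  capital (fun l => P l + Q l) xi n = capital P xi n + capital Q xi n.
Proof. induction n as [|n IH]; simpl; [ring|]. rewrite IH. ring. Qed.

Definition mirror (xi : path) : path := fun k => negb (xi k).

Lemma prefix_mirror (xi : path) (n : nat) :
  prefix (mirror xi) n = map negb (prefix xi n).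
Proof. unfold prefix. rewrite map_map. reflexivity. Qed.

Lemma xval_negb (b : bool) : xval (negb b) = - xval b.
Proof. destruct b; simpl; ring. Qed.

Lemma capital_mirror (P : strategy) (xi : path) (n : nat) :
  capital (fun l => - P (map negb l)) xi n = capital P (mirror xi) n.
Proof.
  induction n as [|n IH]; simpl; [reflexivity|].
  rewrite IH, prefix_mirror. unfold mirror. rewrite xval_negb. ring.
Qed.

Lemma spos_mirror (xi : path) (n : nat) : spos (mirror xi) n = - spos xi n.
Proof.
  induction n as [|n IH]; simpl; [ring|].
  rewrite IH. unfold mirror. rewrite xval_negb. ring.
Qed.

Lemma liminf_minfty_spos_of_mirror (xi : path) :
  limsup_infty (spos (mirror xi)) -> liminf_minfty (spos xi).
Proof.
  intros Hm C N. destruct (Hm (- C) N) as [n [Hn HC]].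
  rewrite spos_mirror in HC. exists n. split; [exact Hn | lra].
Qed.

(* A state (c, u) stands for the running maximum c of s and the drawdown
   u = c - s; both are natural numbers because s_0 = 0. *)
Definition peak_step (st : nat * nat) (b : bool) : nat * nat :=
  let '(c, u) := st in
  if b then match u with O => (S c, O) | S u' => (c, u') end else (c, S u).

Definition state (xi : path) (n : nat) : nat * nat :=
  fold_left peak_step (prefix xi n) (O, O).

Definition level (st : nat * nat) : R := INR (fst st) - INR (snd st).

Lemma state_S (xi : path) (n : nat) :
  state xi (S n) = peak_step (state xi n) (xi n).
Proof. unfold state, prefix. rewrite seq_S, map_app, fold_left_app. reflexivity. Qed.

Lemma level_peak_step (st : nat * nat) (b : bool) :
  level (peak_step st b) = level st + xval b.
Proof.
  destruct st as [c [|u]], b; unfold level; simpl fst; simpl snd; simpl xval;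
    rewrite ?S_INR; simpl INR; ring.
Qed.

Lemma peak_step_le (st : nat * nat) (b : bool) :
  INR (fst (peak_step st b)) <= Rmax (INR (fst st)) (level (peak_step st b)).
Proof.
  destruct st as [c [|u]], b; unfold level; simpl;
    [| apply Rmax_l ..].
  rewrite Rminus_0_r. apply Rmax_r.
Qed.

Lemma spos_level (xi : path) (n : nat) : spos xi n = level (state xi n).
Proof.
  induction n as [|n IH]; [unfold level; simpl; ring|].
  rewrite state_S, level_peak_step, <- IH. reflexivity.
Qed.

Lemma peak_bounded (xi : path) (B : R) (N : nat) :
  (forall n, (N <= n)%nat -> spos xi n <= B) ->
  forall n, (N <= n)%nat -> INR (fst (state xi n)) <= Rmax (INR (fst (state xi N))) B.
Proof.
  intros HB n Hn. induction Hn as [|n Hn IH]; [apply Rmax_l|].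
  eapply Rle_trans; [rewrite state_S; apply peak_step_le|].
  rewrite <- state_S, <- spos_level. specialize (HB (S n) ltac:(lia)).
  apply Rmax_lub; [exact IH | eapply Rle_trans; [exact HB | apply Rmax_r]].
Qed.

Definition weight (c : nat) : R := / (5 * 4 ^ c).

Definition gpot (t : R) : R := t + 3 - / (t + 2).

Definition defect (t : R) : R := / ((t + 1) * (t + 2) * (t + 3)).

Definition potential (st : nat * nat) : R := weight (fst st) * gpot (INR (snd st)).

Definition state_bet (st : nat * nat) : R :=
  weight (fst st) * (gpot (INR (snd st) - 1) - gpot (INR (snd st) + 1)) / 2.

Definition bet : strategy := fun l => state_bet (fold_left peak_step l (O, O)).

Lemma weight_pos (c : nat) : 0 < weight c.
Proof. apply Rinv_0_lt_compat, Rmult_lt_0_compat; [lra | apply pow_lt; lra]. Qed.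

Lemma weight_S (c : nat) : weight (S c) = weight c / 4.
Proof. unfold weight. simpl. field. apply pow_nonzero. lra. Qed.

Lemma weight_le (c c' : nat) : (c <= c')%nat -> weight c' <= weight c.
Proof.
  intros Hc. apply Rinv_le_contravar.
  - apply Rmult_lt_0_compat; [lra | apply pow_lt; lra].
  - apply Rmult_le_compat_l; [lra | apply Rle_pow; [lra | exact Hc]].
Qed.

Lemma gpot_ge (t : R) : 0 <= t -> t + 2 <= gpot t.
Proof.
  intros Ht. unfold gpot.
  assert (/ (t + 2) <= / 2) by (apply Rinv_le_contravar; lra). lra.
Qed.

Lemma gpot_midpoint (t : R) :
  0 <= t -> (gpot (t - 1) + gpot (t + 1)) / 2 + defect t = gpot t.
Proof.
  intros Ht. unfold gpot, defect.
  replace (t - 1 + 2) with (t + 1) by ring.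
  replace (t + 1 + 2) with (t + 3) by ring.
  field. repeat split; lra.
Qed.

Lemma defect_pos (t : R) : 0 <= t -> 0 < defect t.
Proof.
  intros Ht. apply Rinv_0_lt_compat.
  apply Rmult_lt_0_compat; [apply Rmult_lt_0_compat|]; lra.
Qed.

Lemma defect_le (t t' : R) : 0 <= t -> t <= t' -> defect t' <= defect t.
Proof.
  intros Ht Htt'. apply Rinv_le_contravar.
  - apply Rmult_lt_0_compat; [apply Rmult_lt_0_compat|]; lra.
  - apply Rmult_le_compat; [apply Rmult_le_pos | | apply Rmult_le_compat |]; lra.
Qed.

Lemma potential_nonneg (st : nat * nat) : 0 <= potential st.
Proof.
  unfold potential. pose proof (gpot_ge _ (pos_INR (snd st))).
  pose proof (pos_INR (snd st)).
  apply Rmult_le_pos; [apply Rlt_le, weight_pos | lra].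
Qed.

Lemma potential_peak_step (st : nat * nat) (b : bool) :
  potential (peak_step st b) + weight (fst st) * defect (INR (snd st))
  <= potential st + state_bet st * xval b.
Proof.
  destruct st as [c u]. unfold potential, state_bet; simpl fst; simpl snd.
  pose proof (weight_pos c) as Hw. pose proof (pos_INR u) as Hu.
  pose proof (gpot_midpoint _ Hu) as Hmid.
  destruct b; [destruct u as [|u]|]; simpl peak_step; simpl fst; simpl snd; unfold xval.
  - rewrite weight_S. simpl INR.
    replace (0 - 1) with (-1) by ring. replace (0 + 1) with 1 by ring.
    unfold gpot, defect.
    match goal with |- ?l <= ?r => assert (r - l = weight c * (3 / 8)) by field end.
    lra.
  - rewrite S_INR in *. replace (INR u + 1 - 1) with (INR u) in * by ring.
    rewrite <- Hmid. apply Req_le. field.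
  - rewrite S_INR, <- Hmid. apply Req_le. field.
Qed.

Lemma capital_bet_step (xi : path) (n : nat) :
  capital bet xi n - potential (state xi n)
    + weight (fst (state xi n)) * defect (INR (snd (state xi n)))
  <= capital bet xi (S n) - potential (state xi (S n)).
Proof.
  pose proof (potential_peak_step (state xi n) (xi n)) as Hstep.
  rewrite <- state_S in Hstep. simpl capital. unfold bet. fold (state xi n). lra.
Qed.

Lemma capital_bet_sub_potential_ge (xi : path) (n : nat) :
  - / 2 <= capital bet xi n - potential (state xi n).
Proof.
  induction n as [|n IH].
  - unfold potential, weight, gpot. simpl. field_simplify. lra.
  - pose proof (capital_bet_step xi n).
    pose proof (weight_pos (fst (state xi n))).
    pose proof (defect_pos _ (pos_INR (snd (state xi n)))). nra.
Qed.

Lemma capital_bet_ge (xi : path) (n : nat) : - / 2 <= capital bet xi n.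
Proof.
  pose proof (capital_bet_sub_potential_ge xi n).
  pose proof (potential_nonneg (state xi n)). lra.
Qed.

Section EventuallyConstantPeak.

Variables (xi : path) (E : R) (N : nat).
Hypothesis E_pos : 0 < E.
Hypothesis weight_peak_ge : forall n, (N <= n)%nat -> E <= weight (fst (state xi n)).

Lemma limsup_capital_bet_of_drawdown :
  limsup_infty (fun n => INR (snd (state xi n))) -> limsup_infty (capital bet xi).
Proof.
  apply (limsup_infty_minorant _ _ E (- / 2) N E_pos). intros n Hn.
  pose proof (capital_bet_sub_potential_ge xi n). pose proof (weight_peak_ge n Hn).
  pose proof (pos_INR (snd (state xi n))) as Hu. pose proof (gpot_ge _ Hu).
  unfold potential in *. nra.
Qed.

Lemma limsup_capital_bet_of_bounded_drawdown (U : R) (N' : nat) :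
  (forall n, (N' <= n)%nat -> INR (snd (state xi n)) <= U) ->
  limsup_infty (capital bet xi).
Proof.
  intros HU.
  assert (U_nonneg : 0 <= U).
  { pose proof (pos_INR (snd (state xi N'))). specialize (HU N' (le_n _)). lra. }
  apply (limsup_infty_minorant
           (fun n => capital bet xi n - potential (state xi n)) _ 1 0 O); [lra| |].
  { intros n _. pose proof (potential_nonneg (state xi n)). lra. }
  apply (limsup_infty_linear_growth _ (E * defect U) (max N N')).
  { pose proof (defect_pos _ U_nonneg). nra. }
  intros n Hn. pose proof (capital_bet_step xi n).
  pose proof (pos_INR (snd (state xi n))) as Hu.
  assert (E * defect U <= weight (fst (state xi n)) * defect (INR (snd (state xi n)))).
  { apply Rmult_le_compat; [lra | apply Rlt_le, defect_pos; lra
                           | apply weight_peak_ge; lia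
                           | apply defect_le; [exact Hu | apply HU; lia]]. }
  lra.
Qed.

End EventuallyConstantPeak.

Lemma limsup_capital_bet (xi : path) :
  ~ limsup_infty (spos xi) -> limsup_infty (capital bet xi).
Proof.
  intros Hs. destruct (not_limsup_infty_bounded _ Hs) as [B [N HB]].
  destruct (INR_unbounded (Rmax (INR (fst (state xi N))) B)) as [K HK].
  assert (Hweight : forall n, (N <= n)%nat -> weight K <= weight (fst (state xi n))).
  { intros n Hn. apply weight_le, INR_le.
    pose proof (peak_bounded xi B N HB n Hn). lra. }
  destruct (classic (limsup_infty (fun n => INR (snd (state xi n))))) as [Hu | Hu].
  - exact (limsup_capital_bet_of_drawdown xi _ N (weight_pos K) Hweight Hu).
  - destruct (not_limsup_infty_bounded _ Hu) as [U [N' HU]].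
    exact (limsup_capital_bet_of_bounded_drawdown xi _ N (weight_pos K) Hweight U N' HU).
Qed.

Theorem theorem3 : weakly_forces A3.
Proof.
  exists (fun l => bet l + - bet (map negb l)).
  assert (Hcap : forall xi n, capital (fun l => bet l + - bet (map negb l)) xi n
                              = capital bet xi n + capital bet (mirror xi) n).
  { intros xi n. rewrite capital_add, capital_mirror. reflexivity. }
  split.
  - intros xi n. rewrite Hcap.
    pose proof (capital_bet_ge xi n). pose proof (capital_bet_ge (mirror xi) n). lra.
  - intros xi HA. apply not_and_or in HA as [Hsup | Hinf].
    + apply (limsup_infty_minorant (capital bet xi) _ 1 (- / 2) O Rlt_0_1).
      { intros n _. rewrite Hcap. pose proof (capital_bet_ge (mirror xi) n). lra. }
      exact (limsup_capital_bet xi Hsup).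
    + apply (limsup_infty_minorant (capital bet (mirror xi)) _ 1 (- / 2) O Rlt_0_1).
      { intros n _. rewrite Hcap. pose proof (capital_bet_ge xi n). lra. }
      apply limsup_capital_bet. intros Hmirror.
      exact (Hinf (liminf_minfty_spos_of_mirror xi Hmirror)).
Qed.
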